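(* Let $A$ be a central simple algebra of degree $n$ over a field $k$, let $r>1$ and $1\leqslant i_1<\cdots<i_r\leqslant n$ be integers, and let $I_r\subset A$ be a left ideal of $k$-dimension $ni_r$. Let $B=I_r/I_r^\circ I_r$. For a left ideal $I_j\subset I_r$, the kernel of $I_j\to I_r/I_r^\circ I_r$ is $I_r^\circ I_j$, so $I_j/I_r^\circ I_j$ is identified with its image in $B$. Then the map $$(I_1,\ldots,I_{r-1})\mapsto(I_j/I_r^\circ I_j)_{j=1,\ldots,r-1}$$ is a canonical bijection from the set of tuples of left ideals $I_1\subset\cdots\subset I_{r-1}\subset I_r$ of $A$ with $\dim_k I_j=ni_j$ onto the set of tuples $J_1\subset\cdots\subset J_{r-1}$ of left ideals of $B$ with $\dim_k J_j=i_ji_r$.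
   Context: $I^\circ=\{a\in A: Ia=0\}$ is the right annihilator; $UW$ denotes the $k$-span of products $uw$. $I_r^\circ I_r$ is a two-sided ideal of the ring $I_r$ (since $I_rI_r^\circ=0$), so $I_r/I_r^\circ I_r$ is a ring; it is a central simple $k$-algebra of degree $i_r$, isomorphic to $\mathrm{End}_A(I_r)$. *)

From HB Require Import structures.
From mathcomp Require Import all_boot all_algebra all_field.
Set Implicit Arguments. Unset Strict Implicit. Unset Printing Implicit Defensive.
Import GRing.Theory.
Local Open Scope ring_scope.
Local Open Scope vspace_scope.

Section Defs.
Variables (k : fieldType) (A : falgType k).

Definition left_ideal (I : {vspace A}) : bool := (fullv * I <= I)%VS.

Definition two_sided_ideal (I : {vspace A}) : bool :=
  (fullv * I <= I)%VS && (I * fullv <= I)%VS.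

Definition central_simple : Prop :=
  ('Z(fullv : {vspace A}) = (1 : {vspace A}))%VS /\
  (forall I : {vspace A}, two_sided_ideal I -> I = 0%VS \/ I = fullv).

Definition csa_degree (n : nat) : Prop := \dim (fullv : {vspace A}) = (n ^ 2)%N.

(* right annihilator I° = {a in A | I a = 0}, as the intersection of the
   kernels of left multiplication by the basis vectors of I *)
Definition rann (I : {vspace A}) : {vspace A} :=
  (\bigcap_(t < \dim I) lker (amull (tnth (vbasis I) t)))%VS.

End Defs.

(* Write [I_r = A e] with [e] a right unit of [I_r]: it exists because [A] is
   semisimple, every left ideal having a complement built from copies [L b] of a
   minimal left ideal [L]. Then [I_r° = {a | e a = 0}], so [K = I_r° I_r] is
   [I_r ∩ ker (e ·)], and [T ↦ T + K], [S ↦ A e S] are mutually inverse between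
   left ideals inside [I_r] and [I_r]-stable subspaces between [K] and [I_r],
   i.e. left ideals of [B = I_r / K]. Dimensions match because
   [dim (T + K) = dim K + dim (e T)], [dim (e T) dim A = dim (e A) dim T] for
   every left ideal [T], and [dim (e A) = dim (A e) = dim I_r]. *)

From HB Require Import structures.
From mathcomp Require Import all_boot all_algebra all_field.
From mathcomp Require Import zify.
From Stdlib Require Import Classical.
Set Implicit Arguments. Unset Strict Implicit. Unset Printing Implicit Defensive.
Import GRing.Theory.
Local Open Scope vspace_scope.
Local Open Scope ring_scope.

Lemma limg_dim_leq (K : fieldType) (aT rT : vectType K) (f : 'Hom(aT, rT))
    (U : {vspace aT}) :
  (\dim (f @: U) <= \dim U)%N.
Proof. by rewrite -(limg_ker_dim f U) leq_addl. Qed.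

Section LeftIdeals.
Variables (k : fieldType) (A : falgType k).
Implicit Types (a e x y : A) (X Y L : {vspace A}).

Lemma amullE x y : amull x y = x * y. Proof. by rewrite lfunE. Qed.
Lemma amulrE x y : amulr x y = y * x. Proof. by rewrite lfunE. Qed.

Definition lprincipal x : {vspace A} := amulr x @: fullv.
Definition rprincipal x : {vspace A} := amull x @: fullv.

Lemma left_idealP X : reflect (forall a x, x \in X -> a * x \in X) (left_ideal X).
Proof.
apply: (iffP prodvP) => [sAX a x Xx | sAX a x _]; last exact: sAX.
exact: sAX (memvf a) Xx.
Qed.

Lemma left_ideal0 : left_ideal (0%VS : {vspace A}).
Proof. by apply/left_idealP => a x; rewrite memv0 => /eqP ->; rewrite mulr0 mem0v. Qed.

Lemma left_idealT : left_ideal (fullv : {vspace A}).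
Proof. by apply/left_idealP => a x _; rewrite memvf. Qed.

Lemma left_idealI X Y : left_ideal X -> left_ideal Y -> left_ideal (X :&: Y).
Proof.
move=> /left_idealP lX /left_idealP lY; apply/left_idealP => a x.
by rewrite !memv_cap => /andP[Xx Yx]; rewrite lX ?lY.
Qed.

Lemma left_idealD X Y : left_ideal X -> left_ideal Y -> left_ideal (X + Y).
Proof.
move=> /left_idealP lX /left_idealP lY; apply/left_idealP => a z.
by move=> /memv_addP[x Xx [y Yy ->]]; rewrite mulrDr memv_add ?lX ?lY.
Qed.

Lemma left_ideal_amulr X b : left_ideal X -> left_ideal (amulr b @: X).
Proof.
move=> /left_idealP lX; apply/left_idealP => a _ /memv_imgP[x Xx ->].
by rewrite amulrE mulrA -amulrE memv_img ?lX.
Qed.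

Lemma left_ideal_lprincipal x : left_ideal (lprincipal x).
Proof. exact/left_ideal_amulr/left_idealT. Qed.

Lemma left_ideal_fullv_prodv X : left_ideal (fullv * X)%VS.
Proof. by rewrite /left_ideal prodvA prodvSl ?subvf. Qed.

Lemma limg_amull_left_ideal X x : left_ideal X -> (amull x @: X <= X)%VS.
Proof.
move=> /left_idealP lX; apply/subvP => _ /memv_imgP[y Xy ->].
by rewrite amullE lX.
Qed.

Lemma limg_amull_disjoint X Y x : left_ideal X -> left_ideal Y -> (X :&: Y = 0)%VS ->
  (amull x @: X :&: amull x @: Y = 0)%VS.
Proof.
by move=> lX lY dXY; apply/eqP; rewrite -subv0 -dXY capvS ?limg_amull_left_ideal.
Qed.

Lemma memv_lprincipal x : x \in lprincipal x.
Proof. by rewrite -{1}(mul1r x) -amulrE memv_img ?memvf. Qed.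

Lemma lprincipal0 : lprincipal 0 = 0%VS.
Proof.
apply/eqP; rewrite -subv0; apply/subvP => _ /memv_imgP[z _ ->].
by rewrite amulrE mulr0 mem0v.
Qed.

Lemma rprincipal0 : rprincipal 0 = 0%VS.
Proof.
apply/eqP; rewrite -subv0; apply/subvP => _ /memv_imgP[z _ ->].
by rewrite amullE mul0r mem0v.
Qed.

Lemma lprincipal_eq0 x : (lprincipal x == 0%VS) = (x == 0).
Proof.
apply/eqP/eqP => [Ax0 | ->]; last exact: lprincipal0.
by move: (memv_lprincipal x); rewrite Ax0 memv0 => /eqP.
Qed.

Section Idempotent.
Variable e : A.
Hypothesis ee : e * e = e.

Lemma memv_lprincipal_idem y : (y \in lprincipal e) = (y * e == y).
Proof.
apply/idP/eqP => [/memv_imgP[z _ ->] | <-]; first by rewrite amulrE -mulrA ee.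
by rewrite -amulrE memv_img ?memvf.
Qed.

Lemma memv_rprincipal_idem y : (y \in rprincipal e) = (e * y == y).
Proof.
apply/idP/eqP => [/memv_imgP[z _ ->] | <-]; first by rewrite amullE mulrA ee.
by rewrite -amullE memv_img ?memvf.
Qed.

End Idempotent.

Lemma lprincipal_right_unit X e : left_ideal X -> e \in X ->
  (forall y, y \in X -> y * e = y) -> lprincipal e = X.
Proof.
move=> lX Xe e_unit; apply/vspaceP => y; rewrite memv_lprincipal_idem ?(e_unit e) //.
by apply/eqP/idP => [<- | /e_unit //]; rewrite (left_idealP _ lX).
Qed.

Lemma lprincipal1 : lprincipal 1 = fullv.
Proof. by apply/vspaceP => y; rewrite memv_lprincipal_idem ?mulr1 ?eqxx ?memvf. Qed.

Lemma rprincipal1 : rprincipal 1 = fullv.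
Proof. by apply/vspaceP => y; rewrite memv_rprincipal_idem ?mul1r ?eqxx ?memvf. Qed.

Lemma dimvf_gt0 : (0 < \dim (fullv : {vspace A}))%N.
Proof. by rewrite lt0n dimv_eq0 -lprincipal1 lprincipal_eq0 oner_eq0. Qed.

Lemma dim_lprincipal_orthogonal u v : u * u = u -> v * v = v -> u * v = 0 -> v * u = 0 ->
  \dim (lprincipal (u + v)) = (\dim (lprincipal u) + \dim (lprincipal v))%N.
Proof.
move=> uu vv uv vu.
have ww : (u + v) * (u + v) = u + v by rewrite mulrDl !mulrDr uu vv uv vu addr0 add0r.
rewrite -dimv_disjoint_sum; last first.
  apply/eqP; rewrite -subv0; apply/subvP => z; rewrite memv_cap !memv_lprincipal_idem // memv0.
  by case/andP => /eqP zu /eqP zv; rewrite -zu -zv -mulrA vu mulr0.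
congr (\dim _); apply/vspaceP => z; rewrite memv_lprincipal_idem //.
apply/eqP/memv_addP => [<- | [x Ax [y Ay ->]]].
  by exists (z * u); rewrite ?memv_lprincipal_idem -?mulrA ?uu //; exists (z * v);
    rewrite ?memv_lprincipal_idem -?mulrA ?vv -?mulrDr.
move: Ax Ay; rewrite !memv_lprincipal_idem // => /eqP xu /eqP yv.
by rewrite mulrDl !mulrDr -[in x * v]xu -[in y * u]yv -!mulrA uv vu !mulr0 addr0 add0r xu yv.
Qed.

Lemma dim_rprincipal_orthogonal u v : u * u = u -> v * v = v -> u * v = 0 -> v * u = 0 ->
  \dim (rprincipal (u + v)) = (\dim (rprincipal u) + \dim (rprincipal v))%N.
Proof.
move=> uu vv uv vu.
have ww : (u + v) * (u + v) = u + v by rewrite mulrDl !mulrDr uu vv uv vu addr0 add0r.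
rewrite -dimv_disjoint_sum; last first.
  apply/eqP; rewrite -subv0; apply/subvP => z; rewrite memv_cap !memv_rprincipal_idem // memv0.
  by case/andP => /eqP zu /eqP zv; rewrite -zu -zv mulrA uv mul0r.
congr (\dim _); apply/vspaceP => z; rewrite memv_rprincipal_idem //.
apply/eqP/memv_addP => [<- | [x Ax [y Ay ->]]].
  by exists (u * z); rewrite ?memv_rprincipal_idem ?mulrA ?uu //; exists (v * z);
    rewrite ?memv_rprincipal_idem ?mulrA ?vv -?mulrDl.
move: Ax Ay; rewrite !memv_rprincipal_idem // => /eqP ux /eqP vy.
by rewrite mulrDl !mulrDr -[in v * x]ux -[in u * y]vy !mulrA vu uv !mul0r addr0 add0r ux vy.
Qed.

Lemma rannP X a : reflect (forall x, x \in X -> x * a = 0) (a \in rann X).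
Proof.
rewrite /rann memvE; apply: (iffP idP) => [/subv_bigcapP Xa x Xx | Xa].
  have : (X <= lker (amulr a))%VS.
    rewrite -(span_basis (vbasisP X)); apply/span_subvP => _ /tnthP[t ->].
    by have := Xa t isT; rewrite -memvE !memv_ker amullE amulrE.
  by move/subvP/(_ x Xx); rewrite memv_ker amulrE => /eqP.
apply/subv_bigcapP => t _; rewrite -memvE memv_ker amullE Xa //.
exact: vbasis_mem (mem_tnth _ _).
Qed.

Definition minimal_left_ideal L :=
  [/\ left_ideal L, L != 0%VS &
      forall Y, left_ideal Y -> Y != 0%VS -> (\dim L <= \dim Y)%N].

Lemma exists_minimal_left_ideal : exists L, minimal_left_ideal L.
Proof.
suff: forall X, left_ideal X -> X != 0%VS -> exists L, minimal_left_ideal L.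
  by apply; [exact: left_idealT | rewrite -dimv_eq0 -lt0n dimvf_gt0].
move=> X; have [d] := ubnP (\dim X); elim: d X => // d IHd X ltXd lX nzX.
case: (classic (exists Y, [/\ left_ideal Y, Y != 0%VS & (\dim Y < \dim X)%N])).
  by case=> Y [lY nzY ltYX]; apply: (IHd Y) => //; apply: leq_trans ltYX ltXd.
move=> noY; exists X; split=> // Y lY nzY; rewrite leqNgt; apply/negP => ltYX.
by apply: noY; exists Y.
Qed.

End LeftIdeals.

Section SimpleAlgebra.
Variables (k : fieldType) (A : falgType k).
Implicit Types (a b e f u v x y : A) (X Y C L : {vspace A}).
Hypothesis simpleA : forall I : {vspace A}, two_sided_ideal I -> I = 0%VS \/ I = fullv.

Lemma left_ideal_prodv_fullv X : left_ideal X -> X != 0%VS -> (X * fullv)%VS = fullv.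
Proof.
move=> lX nzX; have sX_XA : (X <= X * fullv)%VS by rewrite -{1}(prodv1 X) prodvSr ?subvf.
have idXA : two_sided_ideal (X * fullv)%VS.
  by rewrite /two_sided_ideal prodvA prodvSl //= -prodvA prodvSr ?subvf.
have [XA0 | //] := simpleA idXA.
by move: nzX; rewrite -subv0 -XA0 sX_XA.
Qed.

Lemma exists_amulr_neq0 X y : left_ideal X -> X != 0%VS -> y != 0 ->
  exists a, amulr (a * y) @: X != 0%VS.
Proof.
move=> lX nzX nzy; apply: NNPP => noa; move/eqP: nzy; apply.
have XAy0 a : amulr (a * y) @: X = 0%VS by apply: NNPP => /eqP nz; apply: noa; exists a.
have : (X * fullv <= lker (amulr y))%VS.
  apply/prodvP => x a Xx _; rewrite memv_ker amulrE -mulrA -amulrE -memv0 -(XAy0 a).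
  exact: memv_img.
rewrite left_ideal_prodv_fullv // => /subvP/(_ 1 (memvf 1)).
by rewrite memv_ker amulrE mul1r => /eqP.
Qed.

Lemma exists_amulr_not_sub L X : left_ideal L -> L != 0%VS -> X != fullv ->
  exists b, ~~ (amulr b @: L <= X)%VS.
Proof.
move=> lL nzL nX; apply: NNPP => nob; move/negP: nX; apply.
have LbX b : (amulr b @: L <= X)%VS by apply: NNPP => /negP nLbX; apply: nob; exists b.
rewrite eqEsubv subvf -(left_ideal_prodv_fullv lL nzL).
by apply/prodvP => x b Lx _; rewrite -amulrE (subvP (LbX b)) ?memv_img.
Qed.

Section MinimalLeftIdeal.
Variable L : {vspace A}.
Hypotheses (lL : left_ideal L) (nzL : L != 0%VS)
  (minL : forall Y, left_ideal Y -> Y != 0%VS -> (\dim L <= \dim Y)%N).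

Lemma dim_minimal_gt0 : (0 < \dim L)%N.
Proof. by rewrite lt0n dimv_eq0. Qed.

Lemma minimal_lker_amulr b : amulr b @: L != 0%VS -> (L :&: lker (amulr b) = 0)%VS.
Proof.
move=> nzLb; have := limg_ker_dim (amulr b) L.
have := minL (left_ideal_amulr b lL) nzLb.
by move=> leLLb dimL; apply/eqP; rewrite -dimv_eq0; apply/eqP; lia.
Qed.

Lemma dim_minimal_amulr b : amulr b @: L != 0%VS -> \dim (amulr b @: L) = \dim L.
Proof. by move/minimal_lker_amulr/limg_dim_eq. Qed.

(* Every left ideal is a direct sum of copies [L b] of [L], so each left
   multiplication shrinks it by the same ratio as [L]. *)
Definition dim_proportional X := forall x,
  (\dim (amull x @: X) * \dim L = \dim (amull x @: L) * \dim X)%N.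

Lemma dim_proportional0 : dim_proportional 0%VS.
Proof. by move=> x; rewrite limg0 dimv0 muln0. Qed.

Lemma dim_proportional_amulr b :
  amulr b @: L != 0%VS -> dim_proportional (amulr b @: L).
Proof.
move=> nzLb x; rewrite dim_minimal_amulr //.
have -> : amull x @: (amulr b @: L) = amulr b @: (amull x @: L).
  rewrite -!limg_comp; congr (_ @: _).
  by apply/lfunP => z; rewrite !comp_lfunE !lfunE /= mulrA.
rewrite limg_dim_eq //; apply/eqP; rewrite -subv0 -(minimal_lker_amulr nzLb).
by rewrite capvS ?limg_amull_left_ideal.
Qed.

Lemma dim_proportionalD X Y : left_ideal X -> left_ideal Y -> (X :&: Y = 0)%VS ->
  dim_proportional X -> dim_proportional Y -> dim_proportional (X + Y).
Proof.
move=> lX lY dXY pX pY x.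
by rewrite limgD !dimv_disjoint_sum ?limg_amull_disjoint // mulnDl mulnDr pX pY.
Qed.

Lemma exists_disjoint_amulr X : left_ideal X -> X != fullv ->
  exists2 b, amulr b @: L != 0%VS & (X :&: amulr b @: L = 0)%VS.
Proof.
move=> lX nX; have [b nLbX] := exists_amulr_not_sub lL nzL nX.
have nzLb : amulr b @: L != 0%VS by apply: contraNneq nLbX => ->; rewrite sub0v.
exists b => //; apply/eqP; apply: contraNT nLbX => nzXLb.
have := minL (left_idealI lX (left_ideal_amulr b lL)) nzXLb.
rewrite -(dim_minimal_amulr nzLb) => leLbXLb.
have /eqP <- : (X :&: amulr b @: L == amulr b @: L)%VS by rewrite eqEdim capvSr.
exact: capvSl.
Qed.

Lemma exists_dim_proportional_complement X : left_ideal X ->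
  exists C, [/\ left_ideal C, (X :&: C = 0)%VS, (X + C = fullv)%VS & dim_proportional C].
Proof.
have [d] := ubnP (\dim (fullv : {vspace A}) - \dim X).
elim: d X => // d IHd X codimX lX; have [-> | nX] := eqVneq X fullv.
  by exists 0%VS; split; [exact: left_ideal0 | exact: capv0 | exact: addv0 | exact: dim_proportional0].
have [b nzLb dXLb] := exists_disjoint_amulr lX nX.
have lLb := left_ideal_amulr b lL.
have [|C [lC dXLbC XLbC pC]] := IHd (X + amulr b @: L)%VS _ (left_idealD lX lLb).
  have : (\dim X < \dim (fullv : {vspace A}))%N by move: nX; rewrite eqEdim subvf ltnNge.
  have : (0 < \dim (amulr b @: L))%N by rewrite lt0n dimv_eq0.
  by rewrite dimv_disjoint_sum //; lia.
have dLbC : (amulr b @: L :&: C = 0)%VS.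
  by apply/eqP; rewrite -subv0 -dXLbC capvS ?addvSr.
exists (amulr b @: L + C)%VS; split.
- exact: left_idealD.
- apply/eqP; rewrite -dimv_eq0; apply/eqP.
  have := dimv_sum_cap X (amulr b @: L + C); rewrite addvA XLbC (dimv_disjoint_sum dLbC).
  by have := dimv_disjoint_sum dXLbC; rewrite XLbC (dimv_disjoint_sum dXLb); lia.
- by rewrite addvA.
- exact: dim_proportionalD (dim_proportional_amulr nzLb) pC.
Qed.

Lemma dim_proportional_left_ideal X : left_ideal X -> dim_proportional X.
Proof.
move=> lX x; have [C0 [_ _ C0f pA]] := exists_dim_proportional_complement (left_ideal0 A).
have [C [lC dXC XCf pC]] := exists_dim_proportional_complement lX.
rewrite add0v in C0f; subst C0; have := pA x; have := pC x.
by rewrite -XCf limgD !dimv_disjoint_sum ?limg_amull_disjoint //; nia.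
Qed.

End MinimalLeftIdeal.

Lemma left_ideal_right_unit X : left_ideal X ->
  exists2 e, e \in X & forall y, y \in X -> y * e = y.
Proof.
move=> lX; have [L [lL nzL minL]] := exists_minimal_left_ideal A.
have [C [lC dXC XCf _]] := exists_dim_proportional_complement lL nzL minL lX.
have /memv_addP[e Xe [c Cc e_c]] : 1 \in (X + C)%VS by rewrite XCf memvf.
exists e => // y Xy; have y_ec : y = y * e + y * c by rewrite -mulrDr -e_c mulr1.
suff yc0 : y * c = 0 by rewrite {2}y_ec yc0 addr0.
apply/eqP; rewrite -memv0 -dXC memv_cap (left_idealP _ lC) //.
have -> : y * c = y - y * e by rewrite [X in X - _]y_ec addrAC subrr add0r.
by rewrite memvB ?(left_idealP _ lX).
Qed.

Lemma dim_limg_amull_left_ideal x X : left_ideal X ->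
  (\dim (amull x @: X) * \dim (fullv : {vspace A}) = \dim (rprincipal x) * \dim X)%N.
Proof.
move=> lX; have [L [lL nzL minL]] := exists_minimal_left_ideal A.
have pX := dim_proportional_left_ideal lL nzL minL lX x.
have pA := dim_proportional_left_ideal lL nzL minL (left_idealT A) x.
apply/eqP; rewrite -(eqn_pmul2r (dim_minimal_gt0 nzL)); apply/eqP.
by rewrite /rprincipal; nia.
Qed.

Section MinimalIdempotents.
Variable L : {vspace A}.
Hypotheses (lL : left_ideal L) (nzL : L != 0%VS)
  (minL : forall Y, left_ideal Y -> Y != 0%VS -> (\dim L <= \dim Y)%N).

Lemma lprincipal_minimal_neq0 u : \dim (lprincipal u) = \dim L -> u != 0.
Proof. by move=> dAu; rewrite -lprincipal_eq0 -dimv_eq0 dAu dimv_eq0. Qed.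

Lemma minimal_idempotent_below e : e * e = e -> e != 0 ->
  exists e1 : A, [/\ e1 * e1 = e1, e * e1 = e1, e1 * e = e1 & \dim (lprincipal e1) = \dim L].
Proof.
move=> ee nze; have [a nzLae] := exists_amulr_neq0 lL nzL nze.
have lLae := left_ideal_amulr (a * e) lL.
have [f Laef f_unit] := left_ideal_right_unit lLae.
have ff : f * f = f by apply: f_unit.
have fe : f * e = f by have /memv_imgP[l _ ->] := Laef; rewrite amulrE -!mulrA ee.
have nzf : f != 0.
  apply: contraNneq nzLae => f0; rewrite -subv0; apply/subvP => y Laey.
  by rewrite memv0 -(f_unit y Laey) f0 mulr0.
exists (e * f); split.
- by rewrite mulrA -(mulrA e) fe -mulrA ff.
- by rewrite mulrA ee.
- by rewrite -mulrA fe.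
have sAefLae : (lprincipal (e * f)%R <= amulr (a * e)%R @: L)%VS.
  by apply/subvP => _ /memv_imgP[z _ ->]; rewrite amulrE mulrA (left_idealP _ lLae).
have nzAef : lprincipal (e * f) != 0%VS.
  rewrite lprincipal_eq0; apply: contraNneq nzf => ef0.
  have <- : f * (e * f) = f by rewrite mulrA fe ff.
  by rewrite ef0 mulr0.
apply/eqP; rewrite eqn_leq minL ?left_ideal_lprincipal // andbT.
by rewrite -(dim_minimal_amulr lL nzL minL nzLae) dimvS.
Qed.

Lemma dim_rprincipal_minimal_le u v : u * u = u -> \dim (lprincipal u) = \dim L ->
  v != 0 -> (\dim (rprincipal u) <= \dim (rprincipal v))%N.
Proof.
move=> uu dAu nzv; have nzu := lprincipal_minimal_neq0 dAu.
have nzAv : lprincipal v != 0%VS by rewrite lprincipal_eq0.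
have [a nzAvau] := exists_amulr_neq0 (left_ideal_lprincipal v) nzAv nzu.
have AvauE : amulr (a * u) @: lprincipal v = lprincipal u.
  have lAvau := left_ideal_amulr (a * u) (left_ideal_lprincipal v).
  apply/eqP; rewrite eqEdim dAu (minL lAvau nzAvau) andbT.
  by apply/subvP => _ /memv_imgP[w _ ->]; rewrite amulrE memv_lprincipal_idem // -!mulrA uu.
have /memv_imgP[_ /memv_imgP[z _ ->] uE] : u \in amulr (a * u) @: lprincipal v.
  by rewrite AvauE memv_lprincipal.
rewrite !amulrE in uE; rewrite uE; apply: leq_trans (limg_dim_leq (amull z) _); apply: dimvS.
apply/subvP => _ /memv_imgP[w _ ->]; rewrite amullE -!mulrA -amullE.
by rewrite memv_img // -amullE memv_img ?memvf.
Qed.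

Lemma dim_rprincipal_minimal u v : u * u = u -> v * v = v ->
  \dim (lprincipal u) = \dim L -> \dim (lprincipal v) = \dim L ->
  \dim (rprincipal u) = \dim (rprincipal v).
Proof.
move=> uu vv dAu dAv.
by apply/eqP; rewrite eqn_leq !dim_rprincipal_minimal_le ?lprincipal_minimal_neq0.
Qed.

(* Split [e] into orthogonal idempotents [e1 + e2] with [A e1] minimal and
   induct on [\dim (A e)]. *)
Lemma dim_rprincipal_idem_ratio f e : f * f = f -> \dim (lprincipal f) = \dim L ->
  e * e = e ->
  (\dim (rprincipal e) * \dim L = \dim (lprincipal e) * \dim (rprincipal f))%N.
Proof.
move=> ff dAf; have [d] := ubnP (\dim (lprincipal e)).
elim: d e => // d IHd e ltAed ee.
have [-> | nze] := eqVneq e 0; first by rewrite lprincipal0 rprincipal0 !dimv0.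
have [e1 [e1e1 ee1 e1e dAe1]] := minimal_idempotent_below ee nze.
set e2 := e - e1.
have e2e2 : e2 * e2 = e2 by rewrite /e2 mulrBl !mulrBr ee ee1 e1e e1e1 subrr subr0.
have e1e2 : e1 * e2 = 0 by rewrite /e2 mulrBr e1e e1e1 subrr.
have e2e1 : e2 * e1 = 0 by rewrite /e2 mulrBl ee1 e1e1 subrr.
have e_e12 : e = e1 + e2 by rewrite /e2 addrC subrK.
have dAe12 := dim_lprincipal_orthogonal e1e1 e2e2 e1e2 e2e1.
rewrite e_e12 dAe12 dim_rprincipal_orthogonal // !mulnDl (IHd e2) //.
  by rewrite (dim_rprincipal_minimal e1e1 ff dAe1 dAf) dAe1 mulnC.
by have := dim_minimal_gt0 nzL; rewrite -e_e12 in dAe12; lia.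
Qed.

End MinimalIdempotents.

Lemma dim_rprincipal_idem e : e * e = e -> \dim (rprincipal e) = \dim (lprincipal e).
Proof.
move=> ee; have [L [lL nzL minL]] := exists_minimal_left_ideal A.
have [f Lf f_unit] := left_ideal_right_unit lL.
have ff : f * f = f := f_unit f Lf.
have dAf : \dim (lprincipal f) = \dim L by rewrite (lprincipal_right_unit lL Lf f_unit).
have := dim_rprincipal_idem_ratio lL nzL minL ff dAf (mulr1 1).
rewrite lprincipal1 rprincipal1 => /eqP; rewrite eqn_pmul2l ?dimvf_gt0 // => /eqP dfA.
have := dim_rprincipal_idem_ratio lL nzL minL ff dAf ee.
by rewrite -dfA => /eqP; rewrite eqn_pmul2r ?dim_minimal_gt0 // => /eqP.
Qed.

End SimpleAlgebra.

Section RightUnit.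
Variables (k : fieldType) (A : falgType k).
Hypothesis simpleA : forall I : {vspace A}, two_sided_ideal I -> I = 0%VS \/ I = fullv.
Variables (Ir : {vspace A}) (e : A).
Hypotheses (lIr : left_ideal Ir) (Ir_e : e \in Ir)
  (e_unit : forall y, y \in Ir -> y * e = y).
Implicit Types (S T J : {vspace A}).
Local Notation K := (rann Ir * Ir)%VS.

Lemma idem_right_unit : e * e = e. Proof. exact: e_unit. Qed.

Lemma rann_right_unit : rann Ir = lker (amull e).
Proof.
apply/vspaceP => a; rewrite memv_ker amullE.
apply/rannP/eqP => [/(_ e Ir_e) // | ea0 x Irx]; by rewrite -(e_unit Irx) -mulrA ea0 mulr0.
Qed.

Lemma capv_lker_right_unit J : left_ideal J -> (J <= Ir)%VS ->
  (J :&: lker (amull e) = lker (amull e) * J)%VS.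
Proof.
move=> lJ sJIr; apply/eqP; rewrite eqEsubv; apply/andP; split.
  apply/subvP => z; rewrite memv_cap memv_ker amullE => /andP[Jz /eqP ez0].
  have -> : z = (1 - e) * z by rewrite mulrBl mul1r ez0 subr0.
  by rewrite memv_mul // memv_ker amullE mulrBr mulr1 idem_right_unit subrr.
apply/prodvP => a z; rewrite memv_ker amullE => /eqP ea0 Jz.
by rewrite memv_cap (left_idealP _ lJ) // memv_ker amullE mulrA ea0 mul0r eqxx.
Qed.

Lemma rann_prodv_right_unit : K = (Ir :&: lker (amull e))%VS.
Proof. by rewrite rann_right_unit capv_lker_right_unit ?subvv. Qed.

Lemma dim_rann_prodv : \dim K = \dim (Ir :&: lker (amull e)).
Proof. by rewrite rann_prodv_right_unit. Qed.

Lemma capv_rann_prodv J : left_ideal J -> (J <= Ir)%VS -> (J :&: K = rann Ir * J)%VS.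
Proof.
move=> lJ sJIr.
by rewrite rann_prodv_right_unit capvA (capv_idPl sJIr) capv_lker_right_unit ?rann_right_unit.
Qed.

Lemma mulBr1_mem_rann_prodv z : z \in Ir -> (1 - e) * z \in K.
Proof.
move=> Irz; rewrite rann_prodv_right_unit memv_cap (left_idealP _ lIr) //.
by rewrite memv_ker amullE mulrA mulrBr mulr1 idem_right_unit subrr mul0r eqxx.
Qed.

Lemma addv_rann_prodv_sub T : (T <= Ir)%VS -> (T + K <= Ir)%VS.
Proof. by move=> sTIr; rewrite subv_add sTIr rann_prodv_right_unit capvSl. Qed.

Lemma prodv_addv_rann_prodv T : left_ideal T -> (Ir * (T + K) <= T + K)%VS.
Proof.
move=> lT; rewrite prodvDr addvS //; first exact: subv_trans (prodvSl _ (subvf _)) lT.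
rewrite rann_prodv_right_unit; apply/prodvP => x y Irx.
rewrite memv_cap memv_ker amullE => /andP[_ /eqP ey0].
by rewrite -(e_unit Irx) -mulrA ey0 mulr0 mem0v.
Qed.

Lemma prodv_limg_right_unit_sub S : (K <= S)%VS -> (S <= Ir)%VS -> (Ir * S <= S)%VS ->
  (fullv * (amull e @: S) <= S)%VS.
Proof.
move=> sKS sSIr IrSS; apply/prodvP => a _ _ /memv_imgP[s Ss ->]; rewrite amullE.
have -> : a * (e * s) = (e * a * e) * s + (1 - e) * (a * e * s).
  by rewrite mulrBl mul1r !mulrA addrCA subrr addr0.
apply: memvD; first by rewrite (subvP IrSS) ?memv_mul ?(left_idealP _ lIr).
by rewrite (subvP sKS) ?mulBr1_mem_rann_prodv ?(left_idealP _ lIr) ?(subvP sSIr).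
Qed.

Lemma addv_rann_prodv_limg S : (K <= S)%VS -> (S <= Ir)%VS -> (Ir * S <= S)%VS ->
  (fullv * (amull e @: S) + K = S)%VS.
Proof.
move=> sKS sSIr IrSS; apply/eqP; rewrite eqEsubv subv_add prodv_limg_right_unit_sub //=.
rewrite sKS; apply/subvP => s Ss.
have -> : s = e * s + (1 - e) * s by rewrite mulrBl mul1r addrC subrK.
rewrite memv_add ?mulBr1_mem_rann_prodv ?(subvP sSIr) //.
by rewrite -[e * s]mul1r memv_mul ?memvf // -amullE memv_img.
Qed.

Lemma prodv_limg_addv_rann T : left_ideal T -> (T <= Ir)%VS ->
  (fullv * (amull e @: (T + K)) = T)%VS.
Proof.
move=> lT sTIr; apply/eqP; rewrite eqEsubv; apply/andP; split.
  apply/prodvP => a _ _ /memv_imgP[_ /memv_addP[t Tt [y Ky ->]] ->].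
  move: Ky; rewrite rann_prodv_right_unit memv_cap memv_ker => /andP[_ /eqP].
  by rewrite linearD /= => ->; rewrite addr0 amullE !(left_idealP _ lT).
have [f Tf f_unit] := left_ideal_right_unit simpleA lT.
have fef : f * (e * f) = f by rewrite mulrA (e_unit (subvP sTIr _ Tf)) f_unit.
apply/subvP => t Tt; rewrite -(f_unit _ Tt) -fef mulrA memv_mul ?memvf //.
by rewrite -amullE memv_img // (subvP (addvSl _ _)).
Qed.

Lemma dim_addv_rann_prodv T : (T <= Ir)%VS ->
  (\dim (T + K) = \dim K + \dim (amull e @: T))%N.
Proof.
move=> sTIr; rewrite dim_rann_prodv rann_prodv_right_unit.
have := dimv_sum_cap T (Ir :&: lker (amull e)); have := limg_ker_dim (amull e) T.
by rewrite capvA (capv_idPl sTIr); lia.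
Qed.

Lemma dim_limg_right_unit T : left_ideal T ->
  (\dim (amull e @: T) * \dim (fullv : {vspace A}) = \dim Ir * \dim T)%N.
Proof.
move=> lT; rewrite dim_limg_amull_left_ideal // dim_rprincipal_idem ?idem_right_unit //.
by rewrite (lprincipal_right_unit lIr).
Qed.

Variables (n m : nat).
Hypotheses (dimA : \dim (fullv : {vspace A}) = (n ^ 2)%N) (dimIr : \dim Ir = (n * m)%N)
  (m_gt0 : (0 < m)%N).

Lemma dim_addv_rann_prodvE T j : left_ideal T -> (T <= Ir)%VS ->
  (\dim (T + K) == \dim K + j * m)%N = (\dim T == n * j)%N.
Proof.
move=> lT sTIr; have n_gt0 : (0 < n)%N by move: (dimvf_gt0 A); rewrite dimA; case: n.
have := dim_limg_right_unit lT; rewrite dim_addv_rann_prodv // eqn_add2l dimA dimIr.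
move=> dT; apply/eqP/eqP => ?; nia.
Qed.

Lemma quotient_left_ideal_addv T j : left_ideal T -> (T <= Ir)%VS -> \dim T = (n * j)%N ->
  [/\ (K <= T + K)%VS, (T + K <= Ir)%VS, (Ir * (T + K) <= T + K)%VS
    & \dim (T + K) = (\dim K + j * m)%N].
Proof.
move=> lT sTIr dimT; split; [exact: addvSr | exact: addv_rann_prodv_sub
  | exact: prodv_addv_rann_prodv | by apply/eqP; rewrite dim_addv_rann_prodvE // dimT].
Qed.

Lemma left_ideal_prodv_limg S j : (K <= S)%VS -> (S <= Ir)%VS -> (Ir * S <= S)%VS ->
  \dim S = (\dim K + j * m)%N ->
  [/\ left_ideal (fullv * (amull e @: S)), (fullv * (amull e @: S) <= Ir)%VS
    & \dim (fullv * (amull e @: S)) = (n * j)%N].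
Proof.
move=> sKS sSIr IrSS dimS; have sPsiS := prodv_limg_right_unit_sub sKS sSIr IrSS.
split; [exact: left_ideal_fullv_prodv | exact: subv_trans sPsiS sSIr |].
apply/eqP; rewrite -dim_addv_rann_prodvE ?left_ideal_fullv_prodv ?(subv_trans sPsiS) //.
by rewrite addv_rann_prodv_limg // dimS.
Qed.

End RightUnit.

Unset Implicit Arguments. Set Strict Implicit.

Theorem mainTheorem8 (k : fieldType) (A : falgType k) (n r : nat)
  (i : nat -> nat) (Ir : {vspace A}) :
  central_simple A -> csa_degree A n ->
  (1 < r)%N -> (1 <= i 1%N)%N ->
  (forall j, (1 <= j)%N -> (j < r)%N -> (i j < i j.+1)%N) ->
  (i r <= n)%N ->
  left_ideal Ir -> \dim Ir = (n * i r)%N ->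
  let K := (rann Ir * Ir)%VS in
  (* kernel of I_j -> I_r / I_r° I_r is I_r° I_j *)
  (forall J : {vspace A}, left_ideal J -> (J <= Ir)%VS ->
      (J :&: K)%VS = (rann Ir * J)%VS) /\
  let flagA := fun T : {ffun 'I_r.-1 -> {vspace A}} =>
    (forall j : 'I_r.-1, left_ideal (T j) /\ (T j <= Ir)%VS /\
        \dim (T j) = (n * i j.+1)%N) /\
    (forall j l : 'I_r.-1, (j <= l)%N -> (T j <= T l)%VS) in
  (* left ideals of B = I_r / K, encoded as their preimages in I_r *)
  let flagB := fun S : {ffun 'I_r.-1 -> {vspace A}} =>
    (forall j : 'I_r.-1, (K <= S j)%VS /\ (S j <= Ir)%VS /\
        (Ir * S j <= S j)%VS /\
        \dim (S j) = (\dim K + i j.+1 * i r)%N) /\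
    (forall j l : 'I_r.-1, (j <= l)%N -> (S j <= S l)%VS) in
  let Phi := fun T : {ffun 'I_r.-1 -> {vspace A}} =>
    [ffun j => (T j + K)%VS] in
  (forall T, flagA T -> flagB (Phi T)) /\
  (forall T1 T2, flagA T1 -> flagA T2 -> Phi T1 = Phi T2 -> T1 = T2) /\
  (forall S, flagB S -> exists2 T, flagA T & Phi T = S).
Proof.
move=> [_ simpleA] dimA r_gt1 _ i_incr _ lIr dimIr K; rewrite /K.
have [e Ir_e e_unit] := left_ideal_right_unit simpleA lIr.
have ir_gt0 : (0 < i r)%N.
  have /andP[lt0r1 ltr1r] : (0 < r.-1 < r)%N by lia.
  by have := i_incr r.-1 lt0r1 ltr1r; rewrite prednK //; lia.
have PhiE := quotient_left_ideal_addv simpleA lIr Ir_e e_unit dimA dimIr ir_gt0.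
have PsiE := left_ideal_prodv_limg simpleA lIr Ir_e e_unit dimA dimIr ir_gt0.
have PsiPhi := prodv_limg_addv_rann simpleA lIr Ir_e e_unit.
have PhiPsi := addv_rann_prodv_limg lIr Ir_e e_unit.
split; first exact: capv_rann_prodv lIr Ir_e e_unit.
split; [|split].
- move=> T [T_ideal T_mono]; split=> [j | j l le_jl]; rewrite !ffunE.
    by have [lT [sTIr dimT]] := T_ideal j; have [] := PhiE _ _ lT sTIr dimT.
  exact: addvS (T_mono j l le_jl) (subvv _).
- move=> T1 T2 [T1_ideal _] [T2_ideal _] /ffunP eqPhi; apply/ffunP => j.
  have [lT1 [sT1Ir _]] := T1_ideal j; have [lT2 [sT2Ir _]] := T2_ideal j.
  by rewrite -(PsiPhi _ lT1 sT1Ir) -(PsiPhi _ lT2 sT2Ir); have := eqPhi j; rewrite !ffunE => ->.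
- move=> S [S_ideal S_mono]; exists [ffun j => (fullv * (amull e @: S j))%VS].
    split=> [j | j l le_jl]; rewrite !ffunE; last by rewrite prodvSr // limgS // S_mono.
    by have [sKS [sSIr [IrSS dimS]]] := S_ideal j; have [] := PsiE _ _ sKS sSIr IrSS dimS.
  apply/ffunP => j; rewrite !ffunE; have [sKS [sSIr [IrSS _]]] := S_ideal j.
  exact: PhiPsi.
Qed.
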